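(* Let $k>1$ be an integer with $k\equiv 1\pmod 4$, and let $\mathrm{SG}(n)$ denote the Sprague--Grundy value of a pile of $n$ tokens in the game $i\textsc{-Mark}(\{2\},\{k\})$. Let $b=2k$, $c_0=4k$, $c_m=k(c_{m-1}+2)$ for $m\ge1$, and $a_0=k$, $a_m=k(a_{m-1}+2)$ for $m\ge 1$ (so that $a_0<b<c_0<a_1<c_1<a_2<\cdots$). Let $X=[0,a_0-1]$, $Y=[a_0+1,b-1]$, $Z=[b+1,c_0-1]$, and for $m\ge 1$ let $A_m=[c_{m-1}+1,a_m-1]$ and $C_m=[a_m+1,c_m-1]$ (integer intervals). Then: (1) $\mathrm{SG}(b)=2$, and $\mathrm{SG}(a_m)=\mathrm{SG}(c_m)=2$ for all $m\ge 0$; (2) the sequence of SG values of the elements of $X$, in increasing order, is $(0,0,1,1)^{z},0$ with $z=(a_0-1)/4$; (3) the sequence of SG values of the elements of $Y$ is $(1,0,0,1)^{z'}$ with $z'=(b-a_0-1)/4$; (4) the sequence of SG values of the elements of $Z$ is $(0,0,1,1)^{z''},0$ with $z''=(c_0-b-2)/4$; (5) for every $m\ge 1$, the sequence of SG values of the elements of $A_m$ is $(1,0,0,1)^{y_m},1,0$ with $y_m=(a_m-c_{m-1}-3)/4$; (6) for every $m\ge 1$, the sequence of SG values of the elements of $C_m$ is $(1,0,0,1)^{y'_m},1,0$ with $y'_m=(c_m-a_m-3)/4$. Here $X^z$ denotes the $z$-fold concatenation of the finite sequence $X$.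
   Context: For a nonempty set $S$ of positive integers and a nonempty set $D$ of integers larger than $1$, the impartial game $i\textsc{-Mark}(S,D)$ is played on a single pile of $n\ge 0$ tokens: a move either replaces $n$ by $n-s$ for some $s\in S$ with $s\le n$, or replaces $n$ by $n/d$ for some $d\in D$ dividing $n$ (with $n>0$). The Sprague--Grundy value is defined recursively by $\mathrm{SG}(n)=\mathrm{mex}\{\mathrm{SG}(w): w \text{ an option of } n\}$, where $\mathrm{mex}(T)$ is the smallest nonnegative integer not in $T$. *)

From mathcomp Require Import all_boot.
Set Implicit Arguments. Unset Strict Implicit. Unset Printing Implicit Defensive.

(* mex of a finite list of naturals: least m not in s (it is <= size s). *)
Definition mex (s : seq nat) : nat :=
  find (fun m => m \notin s) (iota 0 (size s).+1).

Definition imark_options (S D : seq nat) (n : nat) : seq nat :=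
  [seq n - s | s <- S & s <= n] ++ [seq n %/ d | d <- D & (0 < n) && (d %| n)].

(* Fuel-based Sprague-Grundy recursion; every option of n is < n whenever
   S consists of positive integers and D of integers > 1, so fuel n.+1 suffices. *)
Fixpoint sg_fuel (S D : seq nat) (fuel n : nat) : nat :=
  match fuel with
  | 0 => 0
  | f.+1 => mex [seq sg_fuel S D f w | w <- imark_options S D n]
  end.

Definition SG (S D : seq nat) (n : nat) : nat := sg_fuel S D n.+1 n.

Definition interval (lo hi : nat) : seq nat := iota lo (hi.+1 - lo).

Definition rep (z : nat) (s : seq nat) : seq nat := flatten (nseq z s).

Fixpoint a_seq (k m : nat) : nat :=
  match m with 0 => k | m'.+1 => k * (a_seq k m' + 2) end.
Fixpoint c_seq (k m : nat) : nat :=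
  match m with 0 => 4 * k | m'.+1 => k * (c_seq k m' + 2) end.

From mathcomp Require Import all_boot zify.

(* With the single subtraction 2, SG(n) = mex {SG(n - 2)} unless k | n, so along each
   parity class SG alternates 0, 1, 0, 1, ...  For n = j * k the extra option j has the
   parity of n and, as k = 1 (mod 4), the same residue mod 4; it changes SG(n) only if
   SG(j) is the value the alternation predicts for n.  This happens exactly at 2k, k, 4k
   and at the points k (x + 2) with x = a_m or c_m: there SG(n - 2) and SG(j) are 0 and 1,
   so SG(n) = 2 and the alternation restarts with the opposite phase, which is also what
   makes all the other multiples of k harmless. *)

Section Unfolding.

Variables (S D : seq nat).
Hypothesis S_gt0 : {in S, forall s, 0 < s}.
Hypothesis D_gt1 : {in D, forall d, 1 < d}.

Lemma imark_options_lt n w : w \in imark_options S D n -> w < n.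
Proof.
rewrite mem_cat => /orP[] /mapP[x]; rewrite mem_filter => /andP[cond xS] ->.
- by move: (S_gt0 _ xS); lia.
- by case/andP: cond => n_gt0 _; apply: ltn_Pdiv; [exact: D_gt1 |].
Qed.

Lemma sg_fuel_stable f f' n :
  n < f -> n < f' -> sg_fuel S D f n = sg_fuel S D f' n.
Proof.
elim: f f' n => [|f IH] [|f'] n //= ltnf ltnf'; congr mex.
apply/eq_in_map => w /imark_options_lt ltwn.
by apply: IH; apply: leq_trans ltwn _.
Qed.

Lemma SG_unfold n : SG S D n = mex [seq SG S D w | w <- imark_options S D n].
Proof.
congr mex; apply/eq_in_map => w /imark_options_lt ltwn.
exact: sg_fuel_stable.
Qed.

End Unfolding.

(* The subtraction move alone makes SG alternate 0, 1, 0, 1, ... in steps of 2;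
   [run_sg p n] is this alternation restarted after a point [p] of SG value 2. *)
Definition run_sg (p n : nat) : nat := n == p %[mod 4].

Lemma run_sg_congr p n n' : n = n' %[mod 4] -> run_sg p n = run_sg p n'.
Proof. by rewrite /run_sg => ->. Qed.

Lemma mex1 x : mex [:: x] = (x == 0).
Proof. by case: x => [|[|x]]. Qed.

Lemma mex2_id x y : y != mex [:: x] -> mex [:: x; y] = mex [:: x].
Proof. by case: x => [|[|x]]; case: y => [|[|y]]. Qed.

Lemma run_sg_prev p n : odd n = odd p -> 1 < n -> mex [:: run_sg p (n - 2)] = run_sg p n.
Proof. by move=> par n_gt1; rewrite mex1 /run_sg; do 2 case: eqP => /=; lia. Qed.

Lemma run_sg_anchor p : mex [:: 2] = run_sg p (p + 2).
Proof. by rewrite /run_sg; case: eqP => //; lia. Qed.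

Lemma run_sg_shift p q n : q = p + 2 %[mod 4] -> odd n = odd p -> run_sg q n != run_sg p n.
Proof. by move=> qp par; rewrite /run_sg; do 2 case: eqP => /=; lia. Qed.

Lemma run_sg_eq1 p n : n = p %[mod 4] -> run_sg p n = 1.
Proof. by rewrite /run_sg => ->; rewrite eqxx. Qed.

Lemma run_sg_eq0 p n : n <> p %[mod 4] -> run_sg p n = 0.
Proof. by rewrite /run_sg => /eqP/negbTE ->. Qed.

Lemma run_sg_neq2 p n : 2 != run_sg p n.
Proof. by rewrite /run_sg; case: (n %% 4 == p %% 4). Qed.

Lemma mex_run_prev p n : odd n = odd p -> p < n ->
  mex [:: if n - 2 == p then 2 else run_sg p (n - 2)] = run_sg p n.
Proof.
move=> par ltpn; have n_gt1 : 1 < n by lia.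
case: eqP => [<-|_]; last exact: run_sg_prev.
by rewrite (run_sg_anchor (n - 2)) subnK.
Qed.

Definition sg_pattern (po pe n : nat) : nat :=
  if odd n then run_sg po n else run_sg pe n.

Lemma sg_pattern_add4 po pe n : sg_pattern po pe (n + 4) = sg_pattern po pe n.
Proof. by rewrite /sg_pattern /run_sg oddD addbF modnDr. Qed.

Lemma sg_pattern_mod4 po pe n :
  sg_pattern (po %% 4) (pe %% 4) n = sg_pattern po pe n.
Proof. by rewrite /sg_pattern /run_sg !modn_mod. Qed.

Section Periodic.

Variables (f : nat -> nat) (d : nat).
Hypothesis f_periodic : forall n, f (n + d) = f n.

Lemma periodicM q n : f (q * d + n) = f n.
Proof. by elim: q => [|q IH] //; rewrite mulSn -addnA addnC f_periodic. Qed.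

Lemma map_iota_mod lo len : map f (iota lo len) = map f (iota (lo %% d) len).
Proof.
rewrite {1}(divn_eq lo d) iotaDl -map_comp.
by apply: eq_map => x /=; rewrite periodicM.
Qed.

Lemma map_iota_periodic lo len : 0 < d ->
  map f (iota lo len) =
  rep (len %/ d) (map f (iota lo d)) ++ take (len %% d) (map f (iota lo d)).
Proof.
move=> d_gt0; rewrite {1}(divn_eq len d).
elim: (len %/ d) lo => [|z IH] lo.
  by rewrite mul0n add0n -map_take take_iota (minn_idPl (ltnW (ltn_pmod _ d_gt0))).
rewrite mulSn -addnA iotaD map_cat IH.
have -> : map f (iota (lo + d) d) = map f (iota lo d).
  by rewrite map_iota_mod [RHS]map_iota_mod modnDr.
by rewrite catA.
Qed.

End Periodic.

Section MarkTwoK.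

Variable k : nat.
Hypothesis k_gt1 : 1 < k.
Hypothesis k_mod4 : k %% 4 = 1.

Local Notation sg := (SG [:: 2] [:: k]).

Lemma k_gt4 : 4 < k. Proof. lia. Qed.

Lemma k_gt0 : 0 < k. Proof. lia. Qed.

Lemma odd_k : odd k. Proof. by rewrite -(odd_mod k (d := 4)) // k_mod4. Qed.

Lemma mulk_mod4 n : k * n = n %[mod 4].
Proof. by rewrite -modnMml k_mod4 mul1n. Qed.

Lemma sg_unfold n : sg n = mex [seq sg w | w <- imark_options [:: 2] [:: k] n].
Proof. by apply: SG_unfold => x; rewrite inE => /eqP ->. Qed.

Lemma sg0 : sg 0 = 0. Proof. by rewrite sg_unfold. Qed.

Lemma sg1 : sg 1 = 0.
Proof. by rewrite sg_unfold /imark_options /= gtnNdvd. Qed.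

Lemma sg_nondvd n : 1 < n -> ~~ (k %| n) -> sg n = mex [:: sg (n - 2)].
Proof. by move=> n_gt1 /negbTE kNn; rewrite sg_unfold /imark_options /= n_gt1 kNn andbF. Qed.

Lemma sg_dvd n : 1 < n -> k %| n -> sg n = mex [:: sg (n - 2); sg (n %/ k)].
Proof. by move=> n_gt1 kn; rewrite sg_unfold /imark_options /= n_gt1 kn (ltnW n_gt1). Qed.

Lemma dvdk_bounds n a b : k %| n -> a * k < n < b * k -> a < n %/ k < b.
Proof. by move=> /divnK {1 2}<-; rewrite !ltn_pmul2r ?k_gt0. Qed.

Definition chain (i : bool) : nat -> nat := if i then a_seq k else c_seq k.

Lemma chainS i m : chain i m.+1 = k * (chain i m + 2).
Proof. by case: i. Qed.

Lemma chainSK i m : chain i m.+1 %/ k = chain i m + 2.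
Proof. by rewrite chainS mulKn ?k_gt0. Qed.

Lemma dvdn_chain i m : k %| chain i m.
Proof. by case: m => [|m]; [case: i; rewrite /= ?dvdn_mull | rewrite chainS dvdn_mulr]. Qed.

Lemma odd_chain i m : odd (chain i m) = i.
Proof.
elim: m => [|m IH]; first by case: i; rewrite /= ?oddM odd_k.
by rewrite chainS oddM odd_k oddD IH addbF.
Qed.

Lemma chainS_mod4 i m : chain i m.+1 = chain i m + 2 %[mod 4].
Proof. by rewrite chainS mulk_mod4. Qed.

Lemma chainS_gt i m : chain i m + 4 < chain i m.+1.
Proof.
rewrite chainS; have : 5 * (chain i m + 2) <= k * (chain i m + 2).
  by rewrite leq_mul2r k_gt4 orbT.
lia.
Qed.

Lemma chain_interleave m : a_seq k m < c_seq k m < a_seq k m.+1.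
Proof.
elim: m => [|m /andP[ac ca]] /=.
  by rewrite mulnC !ltn_pmul2l ?k_gt0; lia.
by rewrite !ltn_pmul2l ?k_gt0 // !ltn_add2r ac.
Qed.

Lemma a_mod4 m : a_seq k m = c_seq k m + 1 %[mod 4].
Proof.
change (chain true m = chain false m + 1 %[mod 4]).
elim: m => [|m IH]; first by rewrite /=; lia.
by have := chainS_mod4 true m; have := chainS_mod4 false m; lia.
Qed.

Lemma c_mod4 m : c_seq k m %% 4 = 0 \/ c_seq k m %% 4 = 2.
Proof. by have := odd_chain false m; change (chain false m) with (c_seq k m); lia. Qed.

Lemma odd_dvdk n : k %| n -> odd (n %/ k) = odd n.
Proof. by move=> /divnK {2}<-; rewrite oddM odd_k andbT. Qed.

Lemma dvdk_mod4 n : k %| n -> n %/ k = n %[mod 4].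
Proof. by move=> /divnK {2}<-; rewrite mulnC mulk_mod4. Qed.

(* The anchors 3 and 2 of the two initial runs are virtual: they only fix the phase,
   SG being 0 at n = 1 and at n = 0. *)
Inductive predicted_sg : nat -> nat -> Prop :=
| pred_chain i m : predicted_sg (chain i m) 2
| pred_2k : predicted_sg (2 * k) 2
| pred_odd_init n : odd n -> n < k -> predicted_sg n (run_sg 3 n)
| pred_even_init n : ~~ odd n -> n < 2 * k -> predicted_sg n (run_sg 2 n)
| pred_even_2k n : ~~ odd n -> 2 * k < n < 4 * k -> predicted_sg n (run_sg (2 * k) n)
| pred_run i m n : odd n = i -> chain i m < n < chain i m.+1 ->
    predicted_sg n (run_sg (chain i m) n).

Definition predicted_below (N : nat) : Prop :=
  forall n v, n < N -> predicted_sg n v -> sg n = v.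

Lemma sg_a0 : predicted_below k -> sg k = 2.
Proof.
move=> IH; rewrite sg_dvd // divnn k_gt0 sg1 (IH (k - 2) (run_sg 3 (k - 2))).
- by rewrite run_sg_eq1 //; lia.
- lia.
- by apply: pred_odd_init; lia.
Qed.

Lemma sg_2k : predicted_below (2 * k) -> sg (2 * k) = 2.
Proof.
move=> IH; rewrite sg_dvd ?dvdn_mull ?(mulnK _ k_gt0) //; last lia.
rewrite (IH 2 (run_sg 2 2)) ?(IH (2 * k - 2) (run_sg 2 (2 * k - 2))).
- by rewrite run_sg_eq0 //; lia.
- lia.
- by apply: pred_even_init; lia.
- lia.
- by apply: pred_even_init => //; lia.
Qed.

Lemma sg_c0 : predicted_below (4 * k) -> sg (4 * k) = 2.
Proof.
move=> IH; rewrite sg_dvd ?dvdn_mull ?(mulnK _ k_gt0) //; last lia.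
rewrite (IH 4 (run_sg 2 4)) ?(IH (4 * k - 2) (run_sg (2 * k) (4 * k - 2))).
- by rewrite run_sg_eq1 //; lia.
- lia.
- by apply: pred_even_2k; lia.
- lia.
- by apply: pred_even_init => //; lia.
Qed.

Lemma sg_chainS i m : predicted_below (chain i m.+1) -> sg (chain i m.+1) = 2.
Proof.
move=> IH; have gap := chainS_gt i m; have cmod := chainS_mod4 i m.
rewrite sg_dvd ?dvdn_chain ?chainSK //; last lia.
rewrite (IH (chain i m + 2) (run_sg (chain i m) (chain i m + 2))).
rewrite (IH (chain i m.+1 - 2) (run_sg (chain i m) (chain i m.+1 - 2))).
- by rewrite run_sg_eq1 ?run_sg_eq0 //; lia.
- lia.
- by apply: pred_run; have := odd_chain i m.+1; lia.
- lia.
- by apply: pred_run; have := odd_chain i m; lia.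
Qed.

Lemma sg_odd_init N : predicted_below N -> odd N -> N < k -> sg N = run_sg 3 N.
Proof.
move=> IH oddN ltNk; case: (ltnP N 2) => [|N_gt1].
  by case: N oddN {IH ltNk} => [|[|]] // _ _; rewrite sg1.
rewrite sg_nondvd ?gtnNdvd ?(ltnW N_gt1) // (IH (N - 2) (run_sg 3 (N - 2))).
- exact: run_sg_prev.
- lia.
- by apply: pred_odd_init; lia.
Qed.

Lemma sg_even_init N : predicted_below N -> ~~ odd N -> N < 2 * k -> sg N = run_sg 2 N.
Proof.
move=> IH evenN ltN2k; case: (ltnP N 2) => [|N_gt1].
  by case: N evenN {IH ltN2k} => [|[|]] // _ _; rewrite sg0.
have kNN : ~~ (k %| N).
  apply/negP => kN; have /andP[q_gt0 q_lt2] := dvdk_bounds _ 0 2 kN (ltac:(lia)).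
  by move: evenN; rewrite -odd_dvdk // (_ : N %/ k = 1) //; lia.
rewrite sg_nondvd // (IH (N - 2) (run_sg 2 (N - 2))).
- by apply: run_sg_prev; rewrite ?(negbTE evenN).
- lia.
- by apply: pred_even_init; lia.
Qed.

Lemma sg_even_2k N : predicted_below N -> ~~ odd N -> 2 * k < N < 4 * k ->
  sg N = run_sg (2 * k) N.
Proof.
move=> IH evenN /andP[lo hi].
have kNN : ~~ (k %| N).
  apply/negP => kN; have /andP[q_gt2 q_lt4] := dvdk_bounds _ 2 4 kN (ltac:(lia)).
  by move: evenN; rewrite -odd_dvdk // (_ : N %/ k = 3) //; lia.
have prev : sg (N - 2) = if N - 2 == 2 * k then 2 else run_sg (2 * k) (N - 2).
  case: eqP => [-> | ne]; first by apply: IH; [lia | exact: pred_2k].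
  by apply: IH; [lia | apply: pred_even_2k; lia].
by rewrite sg_nondvd ?prev ?mex_run_prev //; lia.
Qed.

Lemma sg_neq_run_a0 N j : predicted_below N -> j < N -> odd j -> 1 < j < k + 2 ->
  sg j != run_sg k j.
Proof.
move=> IH ltjN oddj /andP[j_gt1 ltjk2]; case: (ltnP j k) => [ltjk | gejk].
  rewrite (IH j (run_sg 3 j)) //; last exact: pred_odd_init.
  by apply: run_sg_shift; lia.
have -> : j = k by lia.
by rewrite (IH k 2) ?run_sg_neq2 //; [lia | exact: (pred_chain true 0)].
Qed.

Lemma sg_neq_run_c0 N j : predicted_below N -> j < N -> ~~ odd j -> 4 < j < 4 * k + 2 ->
  sg j != run_sg (4 * k) j.
Proof.
move=> IH ltjN evenj /andP[j_gt4 ltj4k].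
have [ltj2k | gtj2k | j2k] := ltngtP j (2 * k).
- rewrite (IH j (run_sg 2 j)) //; last exact: pred_even_init.
  by apply: run_sg_shift; lia.
- have [ltj4k' | gtj4k | j4k] := ltngtP j (4 * k); last 1 first.
  + by rewrite j4k (IH _ 2) ?run_sg_neq2 //; [lia | exact: (pred_chain false 0)].
  + rewrite (IH j (run_sg (2 * k) j)) //; last by apply: pred_even_2k; lia.
    by apply: run_sg_shift; lia.
  + lia.
- by rewrite j2k (IH _ 2) ?run_sg_neq2 //; [lia | exact: pred_2k].
Qed.

Lemma sg_neq_run_chainS N i m j : predicted_below N -> j < N -> odd j = i ->
  chain i m + 2 < j < chain i m.+1 + 2 -> sg j != run_sg (chain i m.+1) j.
Proof.
move=> IH ltjN parj /andP[lo hi].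
have par := odd_chain i m; have par' := odd_chain i m.+1; have cmod := chainS_mod4 i m.
have [jc | ne] := eqVneq j (chain i m.+1).
  by rewrite jc (IH _ 2) ?run_sg_neq2 //; [lia | exact: pred_chain].
rewrite (IH j (run_sg (chain i m) j)) //; last by apply: pred_run; lia.
by apply: run_sg_shift; lia.
Qed.

Lemma sg_neq_run_chain N i m j : predicted_below N -> j < N -> odd j = i ->
  chain i m %/ k < j < chain i m + 2 -> sg j != run_sg (chain i m) j.
Proof.
case: m => [|m] IH ltjN parj; first case: i parj => /= parj.
- by rewrite divnn k_gt0; exact: sg_neq_run_a0 _ _ IH ltjN parj.
- by rewrite (mulnK _ k_gt0); exact: sg_neq_run_c0 _ _ IH ltjN (negbT parj).
- by rewrite chainSK; exact: sg_neq_run_chainS _ _ _ _ IH ltjN parj.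
Qed.

Lemma sg_run N i m : predicted_below N -> odd N = i -> chain i m < N < chain i m.+1 ->
  sg N = run_sg (chain i m) N.
Proof.
move=> IH parN /andP[lo hi]; have par := odd_chain i m; have N_gt1 : 1 < N by lia.
have prev : mex [:: sg (N - 2)] = run_sg (chain i m) N.
  rewrite -mex_run_prev; try lia; congr mex; congr [:: _].
  case: eqP => [-> | ne]; first by apply: IH; [lia | exact: pred_chain].
  by apply: IH; [lia | apply: pred_run; lia].
have [kN | kNN] := boolP (k %| N); last by rewrite sg_nondvd.
rewrite sg_dvd // mex2_id prev //.
have /andP[lo' hi'] : chain i m %/ k < N %/ k < chain i m + 2.
  by apply: dvdk_bounds kN _; rewrite divnK ?dvdn_chain // mulnC -chainS lo hi.
rewrite (run_sg_congr _ _ _ (esym (dvdk_mod4 _ kN))).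
by apply: (sg_neq_run_chain N); rewrite ?odd_dvdk ?ltn_Pdiv ?k_gt1 ?lo' //; lia.
Qed.

Lemma sg_predicted n v : predicted_sg n v -> sg n = v.
Proof.
elim/ltn_ind: n v => n IH v pnv.
have {IH} : predicted_below n by move=> n' v' /IH; apply.
case: n v / pnv => [[] [|m] | | n | n | n | i m n] below *.
- exact: sg_a0.
- exact: (sg_chainS true).
- exact: sg_c0.
- exact: (sg_chainS false).
- exact: sg_2k.
- exact: sg_odd_init.
- exact: sg_even_init.
- exact: sg_even_2k.
- exact: sg_run.
Qed.

(* [rl], [ro], [re] are the residues of [lo], [po], [pe], so that [window] computes. *)
Lemma map_sg_interval po pe rl ro re z r lo hi :
  hi.+1 - lo = 4 * z + r -> r < 4 ->
  lo = rl %[mod 4] -> po = ro %[mod 4] -> pe = re %[mod 4] ->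
  (forall n, lo <= n <= hi -> sg n = sg_pattern po pe n) ->
  let window := [seq sg_pattern ro re i | i <- iota rl 4] in
  [seq sg i | i <- interval lo hi] = rep z window ++ take r window.
Proof.
move=> len r_lt4 lo_rl po_ro pe_re sgE window.
have -> : [seq sg i | i <- interval lo hi] = [seq sg_pattern po pe i | i <- interval lo hi].
  by apply/eq_in_map => n; rewrite mem_iota => ?; apply: sgE; lia.
have periodic := sg_pattern_add4 po pe; have periodic' := sg_pattern_add4 ro re.
rewrite /interval (map_iota_periodic _ _ periodic) // len.
have -> : (4 * z + r) %/ 4 = z by lia.
have -> : (4 * z + r) %% 4 = r by lia.
rewrite /window (map_iota_mod _ _ periodic) (map_iota_mod _ _ periodic' rl) -lo_rl.
by rewrite -(eq_map (sg_pattern_mod4 po pe)) -(eq_map (sg_pattern_mod4 ro re)) -po_ro -pe_re.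
Qed.

Lemma sg_interval_X :
  [seq sg i | i <- interval 0 (k - 1)] = rep ((k - 1) %/ 4) [:: 0; 0; 1; 1] ++ [:: 0].
Proof.
rewrite (map_sg_interval 3 2 0 3 2 ((k - 1) %/ 4) 1) //; [lia.. |].
move=> n /andP[_ le]; rewrite /sg_pattern; case: ifP => par; apply: sg_predicted.
  by apply: pred_odd_init; lia.
by apply: pred_even_init; lia.
Qed.

Lemma sg_interval_Y :
  [seq sg i | i <- interval (k + 1) (2 * k - 1)] = rep ((2 * k - k - 1) %/ 4) [:: 1; 0; 0; 1].
Proof.
have c0_lt_a1 : 4 * k < a_seq k 1 := proj2 (andP (chain_interleave 0)).
rewrite (map_sg_interval k 2 2 1 2 ((2 * k - k - 1) %/ 4) 0) /= ?cats0 //; [lia.. |].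
move=> n /andP[ge le]; rewrite /sg_pattern; case: ifP => par; apply: sg_predicted.
  by apply: (pred_run true 0); [lia | change (k < n < a_seq k 1); lia].
by apply: pred_even_init; lia.
Qed.

Lemma sg_interval_Z :
  [seq sg i | i <- interval (2 * k + 1) (4 * k - 1)] =
  rep ((4 * k - 2 * k - 2) %/ 4) [:: 0; 0; 1; 1] ++ [:: 0].
Proof.
have c0_lt_a1 : 4 * k < a_seq k 1 := proj2 (andP (chain_interleave 0)).
rewrite (map_sg_interval k (2 * k) 3 1 2 ((4 * k - 2 * k - 2) %/ 4) 1) //; [lia.. |].
move=> n /andP[ge le]; rewrite /sg_pattern; case: ifP => par; apply: sg_predicted.
  by apply: (pred_run true 0); [lia | change (k < n < a_seq k 1); lia].
by apply: pred_even_2k; lia.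
Qed.

Lemma sg_interval_A m :
  [seq sg i | i <- interval (c_seq k m + 1) (a_seq k m.+1 - 1)] =
  rep ((a_seq k m.+1 - c_seq k m - 3) %/ 4) [:: 1; 0; 0; 1] ++ [:: 1; 0].
Proof.
have /andP[ac ca] := chain_interleave m; have /andP[ac' _] := chain_interleave m.+1.
have am := a_mod4 m; have am' : a_seq k m.+1 = a_seq k m + 2 %[mod 4] := chainS_mod4 true m.
have sgE n : c_seq k m + 1 <= n <= a_seq k m.+1 - 1 ->
    sg n = sg_pattern (a_seq k m) (c_seq k m) n.
  move=> /andP[ge le]; rewrite /sg_pattern; case: ifP => par; apply: sg_predicted.
    by apply: (pred_run true m); [lia | change (a_seq k m < n < a_seq k m.+1); lia].
  by apply: (pred_run false m); [lia | change (c_seq k m < n < c_seq k m.+1); lia].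
set z := (_ - 3) %/ 4; have [c0 | c2] := c_mod4 m.
- by rewrite (map_sg_interval (a_seq k m) (c_seq k m) 1 1 0 z 2) //; lia.
- by rewrite (map_sg_interval (a_seq k m) (c_seq k m) 3 3 2 z 2) //; lia.
Qed.

Lemma sg_interval_C m :
  [seq sg i | i <- interval (a_seq k m.+1 + 1) (c_seq k m.+1 - 1)] =
  rep ((c_seq k m.+1 - a_seq k m.+1 - 3) %/ 4) [:: 1; 0; 0; 1] ++ [:: 1; 0].
Proof.
have /andP[ac ca] := chain_interleave m; have /andP[ac' ca'] := chain_interleave m.+1.
have am := a_mod4 m; have am' : a_seq k m.+1 = a_seq k m + 2 %[mod 4] := chainS_mod4 true m.
have cm' : c_seq k m.+1 = c_seq k m + 2 %[mod 4] := chainS_mod4 false m.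
have sgE n : a_seq k m.+1 + 1 <= n <= c_seq k m.+1 - 1 ->
    sg n = sg_pattern (a_seq k m.+1) (c_seq k m) n.
  move=> /andP[ge le]; rewrite /sg_pattern; case: ifP => par; apply: sg_predicted.
    by apply: (pred_run true m.+1); [lia | change (a_seq k m.+1 < n < a_seq k m.+2); lia].
  by apply: (pred_run false m); [lia | change (c_seq k m < n < c_seq k m.+1); lia].
set z := (_ - 3) %/ 4; have [c0 | c2] := c_mod4 m.
- by rewrite (map_sg_interval (a_seq k m.+1) (c_seq k m) 0 3 0 z 2) //; lia.
- by rewrite (map_sg_interval (a_seq k m.+1) (c_seq k m) 2 1 2 z 2) //; lia.
Qed.

End MarkTwoK.

Theorem mainTheorem3 (k : nat) (hk1 : 1 < k) (hk4 : k %% 4 = 1) :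
  let sg := SG [:: 2] [:: k] in
  let b := 2 * k in
  let a := a_seq k in
  let c := c_seq k in
  [/\ (sg b = 2 /\ (forall m, sg (a m) = 2 /\ sg (c m) = 2)),
      [seq sg i | i <- interval 0 (a 0 - 1)] = rep ((a 0 - 1) %/ 4) [:: 0; 0; 1; 1] ++ [:: 0],
      [seq sg i | i <- interval (a 0 + 1) (b - 1)] = rep ((b - a 0 - 1) %/ 4) [:: 1; 0; 0; 1],
      [seq sg i | i <- interval (b + 1) (c 0 - 1)] = rep ((c 0 - b - 2) %/ 4) [:: 0; 0; 1; 1] ++ [:: 0] &
      ((forall m, 1 <= m ->
         [seq sg i | i <- interval (c m.-1 + 1) (a m - 1)]
           = rep ((a m - c m.-1 - 3) %/ 4) [:: 1; 0; 0; 1] ++ [:: 1; 0]) /\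
      (forall m, 1 <= m ->
         [seq sg i | i <- interval (a m + 1) (c m - 1)]
           = rep ((c m - a m - 3) %/ 4) [:: 1; 0; 0; 1] ++ [:: 1; 0]))].
Proof.
have sgP := sg_predicted _ hk1 hk4.
split.
- split; first exact/sgP/pred_2k.
  by move=> m; split; apply/sgP; [exact: (pred_chain _ true) | exact: (pred_chain _ false)].
- exact: sg_interval_X.
- exact: sg_interval_Y.
- exact: sg_interval_Z.
- by split=> -[|m] // _; [exact: sg_interval_A | exact: sg_interval_C].
Qed.
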